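(* Let $G$ be a simple stochastic game, let $A$ be a subset of the arcs of $G$, and let $\sigma$ be a positional MAX strategy. Then $v^{G}_{\sigma}(x) = v^{G[A,\sigma]}_{\sigma}(x)$ for every vertex $x$ of $G$.
   Context: A simple stochastic game (SSG) $G$ is a finite directed graph whose vertex set $V$ is partitioned into $V_{\max}$ (MAX vertices), $V_{\min}$ (MIN vertices), $V_R$ (random vertices) and a nonempty set $V_S$ (sinks); every vertex of $V_{\max}\cup V_{\min}\cup V_R$ has at least one outgoing arc, every sink has exactly one outgoing arc, which is a self-loop; each random vertex $x$ carries a probability distribution $p_x$ with rational values on its out-neighbourhood, positive on every out-neighbour; each sink $s$ has a rational value $\mathrm{Val}(s)\in[0,1]$. A positional MAX (resp. MIN) strategy assigns to each MAX (resp. MIN) vertex one of its out-neighbours. Given $\sigma,\tau$ and a start vertex $x_0$, the random play moves from a MAX vertex $x$ to $\sigma(x)$, from a MIN vertex $x$ to $\tau(x)$, from a random vertex $x$ to an out-neighbour drawn according to $p_x$ independently, and stays forever at a sink once reached. The play's value is $\mathrm{Val}(s)$ if it reaches sink $s$ and $0$ otherwise; $v^G_{\sigma,\tau}(x_0)$ is its expectation. A best response to $\sigma$ is a positional MIN strategy $\tau$ with $v_{\sigma,\tau}\le v_{\sigma,\tau'}$ pointwise for all MIN strategies $\tau'$; positional best responses exist, and $v^G_\sigma:=v^G_{\sigma,\tau}$ for any best response $\tau$. Transformed game: for a set $A$ of arcs of $G$ and $f:A\to\mathbb{Q}$, $G[A,f]$ is obtained from a copy of $G$ by replacing each arc $e=(x,y)\in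 A$ by an arc $(x,s_e)$ to a new sink $s_e$ of value $f(e)$ (for random $x$, $p_x(s_e)=p_x(y)$); $y$ is kept. $G[A,\sigma]$ is $G[A,f]$ with $f((x,y))=v^G_\sigma(y)$. Strategies of $G$ and of $G[A,\sigma]$ are identified (a MAX vertex $x$ with $\sigma(x)=y$, $(x,y)\in A$, moves to $s_{(x,y)}$ in $G[A,\sigma]$). *)

From HB Require Import structures.
From mathcomp Require Import all_boot all_order all_algebra.
From mathcomp Require Import all_classical all_reals all_analysis.
Set Implicit Arguments. Unset Strict Implicit. Unset Printing Implicit Defensive.
Import Order.TTheory GRing.Theory Num.Theory.
Import numFieldNormedType.Exports.
Local Open Scope ring_scope.

Inductive vkind := VMax | VMin | VRand | VSink.

(* A (candidate) simple stochastic game on the finite vertex type V.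
   Probabilities and sink values are stored as elements of the real
   field R; [wf_ssg] demands that they are rational. *)
Record ssg (R : realType) (V : finType) := SSG {
  ssg_kind : V -> vkind;
  ssg_arc : rel V;
  ssg_prob : V -> V -> R;      (* prob x y = p_x(y), used for random x *)
  ssg_val : V -> R            (* Val(s), used for sinks s *)
}.

Definition is_max R V (G : ssg R V) x := if ssg_kind G x is VMax then true else false.
Definition is_min R V (G : ssg R V) x := if ssg_kind G x is VMin then true else false.
Definition is_rand R V (G : ssg R V) x := if ssg_kind G x is VRand then true else false.
Definition is_sink R V (G : ssg R V) x := if ssg_kind G x is VSink then true else false.

Definition is_rat (R : realType) (r : R) := exists q : rat, r = ratr q.

Definition wf_ssg R V (G : ssg R V) : Prop :=
  [/\ (exists s, is_sink G s),
      (forall x, ~~ is_sink G x -> exists y, ssg_arc G x y),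
      (forall s, is_sink G s -> forall y, ssg_arc G s y = (y == s)),
      (forall x, is_rand G x ->
         [/\ forall y, ssg_arc G x y -> 0 < ssg_prob G x y,
             forall y, ssg_arc G x y -> is_rat (ssg_prob G x y)
           & \sum_(y | ssg_arc G x y) ssg_prob G x y = 1])
    & (forall s, is_sink G s -> [/\ is_rat (ssg_val G s), 0 <= ssg_val G s & ssg_val G s <= 1])].

(* Positional strategies (total functions; only their values on MAX resp.
   MIN vertices matter). *)
Definition max_strategy R V (G : ssg R V) (sigma : V -> V) : bool :=
  [forall x, is_max G x ==> ssg_arc G x (sigma x)].
Definition min_strategy R V (G : ssg R V) (tau : V -> V) : bool :=
  [forall x, is_min G x ==> ssg_arc G x (tau x)].

(* n_step G sigma tau n x = expected value at time n of the random play from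
   x, i.e. E[ Val(X_n) ; X_n is a sink ].  Since sinks are absorbing this is
   nondecreasing in n and tends to the expectation of the play's value. *)
Fixpoint n_step R V (G : ssg R V) (sigma tau : V -> V) (n : nat) : V -> R :=
  match n with
  | 0 => fun x => if is_sink G x then ssg_val G x else 0
  | n'.+1 => fun x =>
      match ssg_kind G x with
      | VSink => ssg_val G x
      | VMax => n_step G sigma tau n' (sigma x)
      | VMin => n_step G sigma tau n' (tau x)
      | VRand => \sum_(y | ssg_arc G x y) ssg_prob G x y * n_step G sigma tau n' y
      end
  end.

Definition play_value R V (G : ssg R V) (sigma tau : V -> V) (x : V) : R :=
  limn (fun n => n_step G sigma tau n x).

Definition best_response R V (G : ssg R V) (sigma : V -> V) (tau : {ffun V -> V}) : bool :=
  min_strategy G tau &&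
  [forall tau' : {ffun V -> V}, min_strategy G tau' ==>
     [forall x, play_value G sigma tau x <= play_value G sigma tau' x]].

(* v^G_sigma := v^G_{sigma,tau} for a best response tau (all best responses
   give the same values; the fallback branch never happens for an SSG,
   since positional best responses exist). *)
Definition vsigma R V (G : ssg R V) (sigma : V -> V) : V -> R :=
  match [pick tau : {ffun V -> V} | best_response G sigma tau] with
  | Some tau => play_value G sigma tau
  | None => fun _ => 0
  end.

(* Transformed game G[A,f]: vertices V + A (a new sink s_e for each e in A). *)
Definition tvert (V : finType) (A : {set V * V}) : finType :=
  (V + {e : V * V | e \in A})%type.

Definition tgame R V (G : ssg R V) (A : {set V * V}) (f : V * V -> R)
  : ssg R (tvert A) :=
  @SSG R (tvert A)
    (fun u => match u with inl x => ssg_kind G x | inr _ => VSink end)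
    (fun u w => match u, w with
                | inl x, inl y => ssg_arc G x y && ((x, y) \notin A)
                | inl x, inr e => (val e).1 == x
                | inr e, inr e' => e == e'
                | inr _, inl _ => false
                end)
    (fun u w => match u, w with
                | inl x, inl y => ssg_prob G x y
                | inl x, inr e => if (val e).1 == x then ssg_prob G x (val e).2 else 0
                | _, _ => 0
                end)
    (fun u => match u with inl x => ssg_val G x | inr e => f (val e) end).

Definition tgame_sigma R V (G : ssg R V) (A : {set V * V}) (sigma : V -> V) :=
  tgame G A (fun e => vsigma G sigma e.2).

Definition lift_strat (V : finType) (A : {set V * V}) (s : V -> V) : tvert A -> tvert A :=
  fun u => match u with
           | inl x => match insub (x, s x) with
                      | Some e => inr e
                      | None => inl (s x)
                      end
           | inr e => inr e
           end.
Arguments lift_strat {V} A s _.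

From mathcomp Require Import all_boot all_order all_algebra.
From mathcomp Require Import all_classical all_reals all_analysis.
Unset Printing Implicit Defensive.
Import Order.TTheory GRing.Theory Num.Theory.
Import numFieldNormedType.Exports.
Local Open Scope classical_set_scope.
Local Open Scope ring_scope.

(* Fix the MAX strategy sigma.  Then v_sigma is the least nonnegative function
   that dominates the sink values and is superharmonic in the game left to MIN:
   at a MAX vertex it is at least its value at sigma x, at a MIN vertex at least
   its minimum over the successors, at a random vertex at least its p_x-average.
   Indeed the value of a play is the limit of the finite-horizon values, which
   stay below every such function, and letting MIN move greedily towards the
   pointwise infimum of the play values over all MIN strategies is a positional
   best response.
   The new sink s_(x,y) of G[A,sigma] has value v^G_sigma(y), so extending
   v^G_sigma to the new sinks is superharmonic in G[A,sigma], which gives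
   v^G[A,sigma]_sigma <= v^G_sigma on V; conversely the restriction to V of
   min(v^G[A,sigma]_sigma, v^G_sigma) is superharmonic in G. *)

(* Unlike [wf_ssg], this holds for G[A,f] as soon as f is [0,1]-valued on A,
   with no need to know that f is rational. *)
Record weak_wf_ssg {R : realType} {V : finType} (G : ssg R V) : Prop := WeakWfSsg {
  sink_val_in01 : forall x, ssg_kind G x = VSink -> 0 <= ssg_val G x <= 1;
  rand_prob_ge0 : forall x, ssg_kind G x = VRand ->
    forall y, ssg_arc G x y -> 0 <= ssg_prob G x y;
  rand_prob_sum1 : forall x, ssg_kind G x = VRand ->
    \sum_(y | ssg_arc G x y) ssg_prob G x y = 1;
  min_has_arc : forall x, ssg_kind G x = VMin -> exists y, ssg_arc G x y }.
Arguments sink_val_in01 {R V G} _ {x}.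
Arguments rand_prob_ge0 {R V G} _ {x} _ {y}.
Arguments rand_prob_sum1 {R V G} _ {x}.
Arguments min_has_arc {R V G} _ {x}.

Lemma wf_ssg_weak (R : realType) (V : finType) (G : ssg R V) :
  wf_ssg G -> weak_wf_ssg G.
Proof.
case=> _ has_arc _ wf_rand wf_sink; split=> x kx.
- by have := wf_sink x; rewrite /is_sink kx => /(_ isT) [_ -> ->].
- by have := wf_rand x; rewrite /is_rand kx => /(_ isT) [prob_gt0 _ _] y /prob_gt0 /ltW.
- by have := wf_rand x; rewrite /is_rand kx => /(_ isT) [].
- by apply: has_arc; rewrite /is_sink kx.
Qed.

(* The MIN clause says that [w x] is at least the minimum of [w] over the
   successors of [x]. *)
Record superharmonic {R : realType} {V : finType} (G : ssg R V) (sigma : V -> V)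
    (w : V -> R) : Prop := Superharmonic {
  superharmonic_ge0 : forall x, 0 <= w x;
  superharmonic_sink : forall x, ssg_kind G x = VSink -> ssg_val G x <= w x;
  superharmonic_max : forall x, ssg_kind G x = VMax -> w (sigma x) <= w x;
  superharmonic_min : forall x, ssg_kind G x = VMin ->
    forall c, (forall y, ssg_arc G x y -> c <= w y) -> c <= w x;
  superharmonic_rand : forall x, ssg_kind G x = VRand ->
    \sum_(y | ssg_arc G x y) ssg_prob G x y * w y <= w x }.
Arguments superharmonic_ge0 {R V G sigma w} _ x.
Arguments superharmonic_sink {R V G sigma w} _ {x}.
Arguments superharmonic_max {R V G sigma w} _ {x}.
Arguments superharmonic_min {R V G sigma w} _ {x}.
Arguments superharmonic_rand {R V G sigma w} _ {x}.

Section PlayValue.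
Context {R : realType} {V : finType} {G : ssg R V} (wfG : weak_wf_ssg G).
Context {sigma tau : V -> V}.
Local Notation step := (n_step G sigma tau).
Local Notation value := (play_value G sigma tau).

Lemma n_step_in01 n x : 0 <= step n x <= 1.
Proof.
elim: n x => [|n IHn] x /=.
  by rewrite /is_sink; case kx: (ssg_kind G x); rewrite ?lexx ?ler01 ?sink_val_in01.
case kx: (ssg_kind G x) => //; last exact: sink_val_in01.
have p_ge0 := rand_prob_ge0 wfG kx.
apply/andP; split.
  by apply: sumr_ge0 => y xy; rewrite mulr_ge0 ?p_ge0 //; case/andP: (IHn y).
rewrite -(rand_prob_sum1 wfG kx) ler_sum // => y xy.
by rewrite ler_piMr ?p_ge0 //; case/andP: (IHn y).
Qed.

Lemma n_step_leS n x : step n x <= step n.+1 x.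
Proof.
elim: n x => [|n IHn] x.
  have step0_ge0 y : 0 <= step 0 y by case/andP: (n_step_in01 0 y).
  rewrite /=; case kx: (ssg_kind G x) => /=; rewrite {1}/is_sink kx ?lexx //.
  all: try exact: step0_ge0.
  apply: sumr_ge0 => y xy.
  by apply: mulr_ge0; [exact: (rand_prob_ge0 wfG kx xy) | exact: step0_ge0].
rewrite [step n.+1 x]/= [step n.+2 x]/=; case kx: (ssg_kind G x) => //.
by apply: ler_sum => y xy; rewrite ler_wpM2l ?(rand_prob_ge0 wfG kx).
Qed.

Lemma n_step_nondecreasing x : nondecreasing_seq (step ^~ x).
Proof. by apply/nondecreasing_seqP => n; exact: n_step_leS. Qed.

Lemma n_step_cvg x : step ^~ x @ \oo --> value x.
Proof.
have ub : has_ubound (range (step ^~ x)).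
  by exists 1 => _ [n _ <-]; case/andP: (n_step_in01 n x).
have cvg_step := nondecreasing_cvgn (n_step_nondecreasing x) ub.
by rewrite /play_value (cvg_lim _ cvg_step).
Qed.

Lemma play_value_ge0 x : 0 <= value x.
Proof.
apply: limr_ge (cvgP _ (n_step_cvg x)) _.
by near=> n; case/andP: (n_step_in01 n x).
Unshelve. all: by end_near.
Qed.

Lemma play_value_le1 x : value x <= 1.
Proof.
apply: limr_le (cvgP _ (n_step_cvg x)) _.
by near=> n; case/andP: (n_step_in01 n x).
Unshelve. all: by end_near.
Qed.

Lemma play_value_eq x (f : nat -> R) c :
  (forall n, step n.+1 x = f n) -> f @ \oo --> c -> value x = c.
Proof.
move=> stepE; have -> : f = (fun n => step n.+1 x) by apply: funext => n; rewrite stepE.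
have := n_step_cvg x; rewrite -cvg_shiftS => stepS_cvg f_cvg.
exact: cvg_unique stepS_cvg f_cvg.
Qed.

Lemma play_value_sink x : ssg_kind G x = VSink -> value x = ssg_val G x.
Proof.
move=> kx; apply: (play_value_eq x (fun=> ssg_val G x)) => [n|].
  by rewrite /= kx.
exact: cvg_cst.
Qed.

Lemma play_value_max x : ssg_kind G x = VMax -> value x = value (sigma x).
Proof.
move=> kx; apply: (play_value_eq x (step ^~ (sigma x))) => [n|].
  by rewrite /= kx.
exact: n_step_cvg.
Qed.

Lemma play_value_min x : ssg_kind G x = VMin -> value x = value (tau x).
Proof.
move=> kx; apply: (play_value_eq x (step ^~ (tau x))) => [n|].
  by rewrite /= kx.
exact: n_step_cvg.
Qed.

Lemma play_value_rand x : ssg_kind G x = VRand ->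
  value x = \sum_(y | ssg_arc G x y) ssg_prob G x y * value y.
Proof.
move=> kx; apply: (play_value_eq x
  (fun n => \sum_(y | ssg_arc G x y) ssg_prob G x y * step n y)) => [n|].
  by rewrite /= kx.
apply: cvg_big => //; first exact: add_continuous.
by move=> y _; apply: cvgMl_tmp; exact: n_step_cvg.
Qed.

Lemma play_value_least w : superharmonic G sigma w ->
  (forall x, ssg_kind G x = VMin -> w (tau x) <= w x) -> forall x, value x <= w x.
Proof.
move=> w_super w_tau x.
have step_le n y : step n y <= w y.
  elim: n y => [|n IHn] y /=.
    rewrite /is_sink; case ky: (ssg_kind G y).
    all: rewrite ?(superharmonic_ge0 w_super) //.
    exact: (superharmonic_sink w_super ky).
  case ky: (ssg_kind G y).
  - exact: le_trans (IHn _) (superharmonic_max w_super ky).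
  - exact: le_trans (IHn _) (w_tau _ ky).
  - apply: le_trans (superharmonic_rand w_super ky); apply: ler_sum => z yz.
    by rewrite ler_wpM2l //; exact: (rand_prob_ge0 wfG ky yz).
  - exact: (superharmonic_sink w_super ky).
apply: limr_le (cvgP _ (n_step_cvg x)) _.
by near=> n; exact: step_le.
Unshelve. all: by end_near.
Qed.

End PlayValue.

Section BestResponse.
Context {R : realType} {V : finType} {G : ssg R V} (wfG : weak_wf_ssg G).
Variable sigma : V -> V.

Lemma is_minP x : reflect (ssg_kind G x = VMin) (is_min G x).
Proof. by rewrite /is_min; case: (ssg_kind G x); constructor. Qed.

Definition some_arc : {ffun V -> V} := [ffun x => odflt x [pick y | ssg_arc G x y]].

Lemma min_strategy_some_arc : min_strategy G some_arc.
Proof.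
apply/forallP => x; apply/implyP => /is_minP kx; rewrite ffunE.
case: pickP => //= no_arc; have [y xy] := min_has_arc wfG kx.
by move: (no_arc y); rewrite xy.
Qed.

Definition best_reply_at x : {ffun V -> V} :=
  [arg min_(t < some_arc | min_strategy G t) play_value G sigma t x]%O.

Definition inf_value x := play_value G sigma (best_reply_at x) x.

Lemma min_strategy_best_reply_at x : min_strategy G (best_reply_at x).
Proof.
by rewrite /best_reply_at; case: arg_minP => //; exact: min_strategy_some_arc.
Qed.

Lemma inf_value_le (t : {ffun V -> V}) x :
  min_strategy G t -> inf_value x <= play_value G sigma t x.
Proof.
rewrite /inf_value /best_reply_at.
case: arg_minP => [|t' _ t'_min /t'_min //]; exact: min_strategy_some_arc.
Qed.

Definition greedy (w : V -> R) : {ffun V -> V} :=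
  [ffun x => [arg min_(y < some_arc x | ssg_arc G x y) w y]%O].

Lemma greedyP w x : ssg_kind G x = VMin ->
  ssg_arc G x (greedy w x) /\ forall y, ssg_arc G x y -> w (greedy w x) <= w y.
Proof.
move=> kx; rewrite ffunE; case: arg_minP => [|y xy y_min]; last by [].
by move/forallP: min_strategy_some_arc => /(_ x) /implyP; apply; apply/is_minP.
Qed.

Lemma min_strategy_greedy w : min_strategy G (greedy w).
Proof. by apply/forallP => x; apply/implyP => /is_minP /(greedyP w) []. Qed.

Lemma play_value_greedy_le w : superharmonic G sigma w ->
  forall x, play_value G sigma (greedy w) x <= w x.
Proof.
move=> w_super; apply: (play_value_least wfG _ w_super) => x kx.
by have [_ greedy_min] := greedyP w x kx; apply: (superharmonic_min w_super kx).
Qed.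

Lemma inf_value_superharmonic : superharmonic G sigma inf_value.
Proof.
split=> x.
- exact: play_value_ge0.
- by move=> kx; rewrite /inf_value (play_value_sink wfG).
- move=> kx; rewrite {2}/inf_value (play_value_max wfG _ kx).
  exact/inf_value_le/min_strategy_best_reply_at.
- move=> kx c c_le; rewrite /inf_value (play_value_min wfG _ kx).
  have bx_strat := min_strategy_best_reply_at x.
  have x_arc : ssg_arc G x (best_reply_at x x).
    by move/forallP: bx_strat => /(_ x) /implyP; apply; apply/is_minP.
  exact: le_trans (c_le _ x_arc) (inf_value_le _ _ bx_strat).
- move=> kx; rewrite {2}/inf_value (play_value_rand wfG _ kx).
  apply: ler_sum => y xy; rewrite ler_wpM2l ?(rand_prob_ge0 wfG kx xy) //.
  exact/inf_value_le/min_strategy_best_reply_at.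
Qed.

Lemma play_value_greedy_inf x : play_value G sigma (greedy inf_value) x = inf_value x.
Proof.
apply/le_anti; rewrite (play_value_greedy_le _ inf_value_superharmonic) /=.
exact/inf_value_le/min_strategy_greedy.
Qed.

Lemma best_response_greedy_inf : best_response G sigma (greedy inf_value).
Proof.
rewrite /best_response min_strategy_greedy.
apply/forallP => t; apply/implyP => t_strat.
by apply/forallP => x; rewrite play_value_greedy_inf inf_value_le.
Qed.

Lemma vsigmaE : vsigma G sigma = inf_value.
Proof.
apply: funext => x; rewrite /vsigma.
case: pickP => [t /andP [t_strat /forallP t_best]|].
  apply/le_anti; rewrite inf_value_le // andbT -play_value_greedy_inf.
  by move/implyP: (t_best (greedy inf_value)) => /(_ (min_strategy_greedy _)) /forallP.
by move/(_ (greedy inf_value)); rewrite best_response_greedy_inf.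
Qed.

Lemma vsigma_superharmonic : superharmonic G sigma (vsigma G sigma).
Proof. by rewrite vsigmaE; exact: inf_value_superharmonic. Qed.

Lemma vsigma_least w : superharmonic G sigma w -> forall x, vsigma G sigma x <= w x.
Proof.
move=> w_super x; rewrite vsigmaE.
apply: le_trans (inf_value_le _ _ (min_strategy_greedy w)) _.
exact: play_value_greedy_le.
Qed.

Lemma vsigma_sink x : ssg_kind G x = VSink -> vsigma G sigma x = ssg_val G x.
Proof. by move=> kx; rewrite vsigmaE /inf_value (play_value_sink wfG). Qed.

Lemma vsigma_le1 x : vsigma G sigma x <= 1.
Proof. by rewrite vsigmaE; exact: play_value_le1. Qed.

End BestResponse.

Section LiftStrategy.
Context {V : finType} (A : {set V * V}) (s : V -> V).

Variant lift_strat_spec x : tvert A -> Type :=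
  | LiftStratKeep : lift_strat_spec x (inl (s x))
  | LiftStratNewSink e of val e = (x, s x) : lift_strat_spec x (inr e).

Lemma lift_stratP x : lift_strat_spec x (lift_strat A s (inl x)).
Proof.
by rewrite /lift_strat; case: insubP => [e _ /LiftStratNewSink|_]; last constructor.
Qed.

End LiftStrategy.

Section Transform.
Context {R : realType} {V : finType} {G : ssg R V} (wfG : weak_wf_ssg G).
Context {A : {set V * V}} (A_arcs : forall e, e \in A -> ssg_arc G e.1 e.2).

Lemma sum_new_sinks (F : V * V -> R) x :
  \sum_(e : {e : V * V | e \in A} | (val e).1 == x) F (val e) =
  \sum_(y | (x, y) \in A) F (x, y).
Proof.
rewrite -(big_sub_cond A (fun e => e.1 == x)).
rewrite (reindex_onto (fun y => (x, y)) snd) => [|[a b] /andP [_ /eqP /= ->] //].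
by under eq_bigl => y do rewrite /= !eqxx !andbT.
Qed.

Lemma sum_arcs_split (f : V -> R) x :
  \sum_(y | ssg_arc G x y) ssg_prob G x y * f y =
  \sum_(y | ssg_arc G x y && ((x, y) \notin A)) ssg_prob G x y * f y +
  \sum_(e : {e : V * V | e \in A} | (val e).1 == x) ssg_prob G x (val e).2 * f (val e).2.
Proof.
rewrite (bigID (fun y => (x, y) \in A)) /= addrC; congr (_ + _).
rewrite (sum_new_sinks (fun e => ssg_prob G x e.2 * f e.2)); apply: eq_bigl => y.
by case xyA: ((x, y) \in A); rewrite ?andbT ?andbF //; exact: (A_arcs _ xyA).
Qed.

Lemma sum_tgame_arcs (f : V * V -> R) (g : tvert A -> R) x :
  \sum_(t | ssg_arc (tgame G A f) (inl x) t) ssg_prob (tgame G A f) (inl x) t * g t =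
  \sum_(y | ssg_arc G x y && ((x, y) \notin A)) ssg_prob G x y * g (inl y) +
  \sum_(e : {e : V * V | e \in A} | (val e).1 == x) ssg_prob G x (val e).2 * g (inr e).
Proof. by rewrite big_sumType /=; congr (_ + _); apply: eq_bigr => e /= ->. Qed.

Lemma tgame_weak_wf f :
  (forall e, e \in A -> 0 <= f e <= 1) -> weak_wf_ssg (tgame G A f).
Proof.
move=> f_in01; split.
- case=> [x kx|e _] /=; first exact: (sink_val_in01 wfG kx).
  exact: f_in01 (valP e).
- case=> [x|//] /= kx [y /andP [xy _]|e /eqP ex] /=.
    exact: (rand_prob_ge0 wfG kx xy).
  rewrite ex eqxx; apply: (rand_prob_ge0 wfG kx); rewrite -ex; exact: A_arcs _ (valP e).
- case=> [x|//] kx; have := rand_prob_sum1 wfG kx.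
  rewrite (eq_bigr (fun y => ssg_prob G x y * 1)) => [|y _]; last by rewrite mulr1.
  rewrite (sum_arcs_split (fun=> 1)) -(sum_tgame_arcs f (fun=> 1)) => <-.
  by apply: eq_bigr => t _; rewrite mulr1.
- case=> [x|//] /= kx; have [y xy] := min_has_arc wfG kx.
  case xyA: ((x, y) \in A).
    by exists (inr (Sub (x, y) xyA)); rewrite /= eqxx.
  by exists (inl y); rewrite /= xy xyA.
Qed.

Variable sigma : V -> V.
Local Notation vG := (vsigma G sigma).
Local Notation H := (tgame_sigma G A sigma).
Local Notation vH := (vsigma H (lift_strat A sigma)).

Lemma tgame_sigma_weak_wf : weak_wf_ssg H.
Proof.
apply: tgame_weak_wf => e _.
by rewrite (superharmonic_ge0 (vsigma_superharmonic wfG sigma)) (vsigma_le1 wfG).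
Qed.

Lemma vsigma_tgame_new_sink e : vH (inr e) = vG (val e).2.
Proof. exact: (vsigma_sink tgame_sigma_weak_wf). Qed.

Lemma vsigma_tgame_le x : vH (inl x) <= vG x.
Proof.
pose w (t : tvert A) := match t with inl y => vG y | inr e => vG (val e).2 end.
suff w_super : superharmonic H (lift_strat A sigma) w.
  exact: (vsigma_least tgame_sigma_weak_wf _ _ w_super (inl x)).
have vG_super := vsigma_superharmonic wfG sigma; split.
- by case=> [y|e]; exact: (superharmonic_ge0 vG_super).
- by case=> [y ky|//]; rewrite /= (vsigma_sink wfG).
- case=> [y ky|//]; case: (lift_stratP A sigma y) => [|e ev] /=; rewrite ?ev;
    exact: (superharmonic_max vG_super ky).
- case=> [y ky|//] c c_le; apply: (superharmonic_min vG_super ky) => z yz.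
  case yzA: ((y, z) \in A).
    by apply: (c_le (inr (Sub (y, z) yzA))); rewrite /= eqxx.
  by apply: (c_le (inl z)); rewrite /= yz yzA.
- case=> [y ky|//]; rewrite sum_tgame_arcs /= -(sum_arcs_split vG).
  exact: (superharmonic_rand vG_super ky).
Qed.

Lemma vsigma_le_tgame x : vG x <= vH (inl x).
Proof.
(* With [vH \o inl] alone, the MAX clause at y with (y, sigma y) in A would
   need vH (inl (sigma y)) <= vH (inl y), whereas vH (inl y) is only known to
   dominate vH (inr (y, sigma y)) = vG (sigma y). *)
pose w y := Order.min (vH (inl y)) (vG y).
have w_le_vH y : w y <= vH (inl y) by rewrite ge_min lexx.
have w_le_vG y : w y <= vG y by rewrite ge_min lexx orbT.
suff w_super : superharmonic G sigma w.
  exact: le_trans (vsigma_least wfG _ _ w_super x) (w_le_vH x).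
have vG_super := vsigma_superharmonic wfG sigma.
have vH_super := vsigma_superharmonic tgame_sigma_weak_wf (lift_strat A sigma).
split=> y.
- by rewrite le_min (superharmonic_ge0 vG_super) (superharmonic_ge0 vH_super).
- move=> ky; rewrite le_min (vsigma_sink wfG) // (vsigma_sink tgame_sigma_weak_wf) //.
  by rewrite lexx.
- move=> ky; rewrite le_min; apply/andP; split.
    apply: le_trans (superharmonic_max vH_super (x := inl y) ky).
    case: (lift_stratP A sigma y) => [|e ev]; first exact: w_le_vH.
    by rewrite vsigma_tgame_new_sink ev.
  exact: le_trans (w_le_vG _) (superharmonic_max vG_super ky).
- move=> ky c c_le; rewrite le_min; apply/andP; split.
    apply: (superharmonic_min vH_super (x := inl y) ky).
    move=> -[z /andP [yz _]|e /eqP ey].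
      exact: le_trans (c_le z yz) (w_le_vH z).
    have yz : ssg_arc G y (val e).2 by rewrite -ey; exact: A_arcs _ (valP e).
    by rewrite vsigma_tgame_new_sink; exact: le_trans (c_le _ yz) (w_le_vG _).
  apply: (superharmonic_min vG_super ky) => z yz.
  exact: le_trans (c_le z yz) (w_le_vG z).
- move=> ky; have p_ge0 := rand_prob_ge0 wfG ky; rewrite le_min; apply/andP; split.
    apply: le_trans (superharmonic_rand vH_super (x := inl y) ky).
    rewrite sum_tgame_arcs sum_arcs_split; apply: lerD; apply: ler_sum => z.
      by case/andP=> yz _; rewrite ler_wpM2l ?p_ge0.
    move/eqP=> ez; rewrite vsigma_tgame_new_sink ler_wpM2l ?w_le_vG //.
    by apply: p_ge0; rewrite -ez; exact: A_arcs _ (valP z).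
  apply: le_trans (superharmonic_rand vG_super ky).
  by apply: ler_sum => z yz; rewrite ler_wpM2l ?p_ge0.
Qed.

End Transform.

Theorem lemma12 (R : realType) (V : finType) (G : ssg R V)
  (A : {set V * V}) (sigma : V -> V) :
  wf_ssg G ->
  (forall e, e \in A -> ssg_arc G e.1 e.2) ->
  max_strategy G sigma ->
  forall x : V,
    vsigma G sigma x = vsigma (tgame_sigma G A sigma) (lift_strat A sigma) (inl x).
Proof.
move=> /wf_ssg_weak wfG A_arcs _ x.
by apply/le_anti; rewrite (vsigma_le_tgame wfG A_arcs) (vsigma_tgame_le wfG A_arcs).
Qed.
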